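(* In the quantum disk setting of the context, let $\alpha,\beta\in\mathbb{C}$ and $\delta\in\mathbb R\setminus\{0\}$ satisfy $\delta^2q\alpha=-\beta^*$. Then $\mathcal{J}(\xi\triangleright\phi)=\triangleright\sigma_{\mathcal{S}}(\mathcal{J}\phi\otimes\xi^* )$ for all $\xi\in\Omega^1$, $\phi\in\mathcal{S}$, and the operators $D=\triangleright\circ\nabla_{\mathcal{S}}$ (explicitly $D(a s)=\beta\frac{\partial a}{\partial\bar z}w\,\bar s$, $D(a\bar s)=\alpha\frac{\partial a}{\partial z}w\,s$), $\mathcal{J}$ and $\gamma$ satisfy $\mathcal J^2=-1$, $\mathcal J\gamma=-\gamma\mathcal J$, $\gamma^2=1$, $[\gamma,a]=0$, $D\gamma=-\gamma D$, $[a,\mathcal J b\mathcal J^{-1}]=0$, $\mathcal J D=D\mathcal J$ and $[[D,a],\mathcal J b\mathcal J^{-1}]=0$ for all $a,b\in\mathbb C_q[D]$.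
   Context: $q$ is real nonzero. $\mathbb{C}_q[D]$ is the $*$-algebra generated by $z,\bar z$ with $z\bar z=q^{-2}\bar zz-q^{-2}+1$, $z^*=\bar z$, $\mathbb Z$-graded by $|z|=1$, $|\bar z|=-1$; $w=1-\bar zz$. Its $*$-calculus has $\Omega^1$ free as a left module on ${\rm d}z,{\rm d}\bar z$ with $z\,{\rm d}z=q^{-2}{\rm d}z\,z$, $z\,{\rm d}\bar z=q^{-2}{\rm d}\bar z\,z$, $\bar z\,{\rm d}z=q^2{\rm d}z\,\bar z$, $\bar z\,{\rm d}\bar z=q^2{\rm d}\bar z\,\bar z$, ${\rm d}z\wedge{\rm d}\bar z=-q^{-2}{\rm d}\bar z\wedge{\rm d}z$, ${\rm d}z\wedge{\rm d}z={\rm d}\bar z\wedge{\rm d}\bar z=0$; write ${\rm d}a=\frac{\partial a}{\partial z}{\rm d}z+\frac{\partial a}{\partial\bar z}{\rm d}\bar z$. The spinor bimodule $\mathcal S$ is the free left module on $s,\bar s$ with $s.a=q^{|a|}a.s$, $\bar s.a=q^{|a|}a.\bar s$ for homogeneous $a$. The connection: $\nabla_{\mathcal S}(as+b\bar s)={\rm d}a\otimes s+{\rm d}b\otimes\bar s$, with $\sigma_{\mathcal S}(s\otimes{\rm d}a)=q^{|a|}{\rm d}a\otimes s$, $\sigma_{\mathcal S}(\bar s\otimes{\rm d}a)=q^{|a|}{\rm d}a\otimes\bar s$. The Clifford action is the bimodule map with ${\rm d}z\triangleright\bar s=\alpha ws$, ${\rm d}\bar z\triangleright s=\beta w\bar s$,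 ${\rm d}z\triangleright s={\rm d}\bar z\triangleright\bar s=0$. $\gamma$ is the bimodule map with $\gamma(s)=s$, $\gamma(\bar s)=-\bar s$. $\mathcal J$ is the antilinear map with $\mathcal J(s)=\delta\bar s$, $\mathcal J(\bar s)=-\delta^{-1}s$, $\mathcal J(a.\phi)=\mathcal J(\phi).a^*$, $\mathcal J(\phi.a)=a^*.\mathcal J(\phi)$. *)

From HB Require Import structures.
From mathcomp Require Import all_boot all_order all_algebra.
Set Implicit Arguments. Unset Strict Implicit. Unset Printing Implicit Defensive.
Import Order.TTheory GRing.Theory Num.Theory.
Local Open Scope ring_scope.

(* Data of the quantum disk C_q[D] over a numeric closed field C (e.g. the
   complex numbers) together with its first-order *-calculus.
   - qA is the algebra, qstar its *-involution, qz / qzb the generators z, zbar;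
   - qsig is the degree automorphism  a |-> q^{|a|} a  (on homogeneous a),
     i.e. the unique algebra map with z |-> q z, zbar |-> q^-1 zbar;
   - qdz, qdzb are the partial derivatives: d a = qdz a dz + qdzb a dzbar.
   Since Omega^1 is free on dz, dzbar with  dz.a = q^{2|a|} a.dz  (and the
   same for dzbar), the Leibniz rule for d reads
     qdz (a b) = qdz a * qsig (qsig b) + a * qdz b.                        *)
Record qdisk (C : numClosedFieldType) (q : C) := QDisk {
  qA : algType C;
  qstar : qA -> qA;
  qz : qA;
  qzb : qA;
  qsig : qA -> qA;
  qdz : qA -> qA;
  qdzb : qA -> qA;
  qrel : qz * qzb = q ^- 2 *: (qzb * qz) - (q ^- 2) *: 1 + 1;
  qgen : forall P : qA -> Prop, P 1 -> P qz -> P qzb ->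
           (forall (c : C) a, P a -> P (c *: a)) ->
           (forall a b, P a -> P b -> P (a + b)) ->
           (forall a b, P a -> P b -> P (a * b)) -> forall a, P a;
  qstar_add : forall a b, qstar (a + b) = qstar a + qstar b;
  qstar_scale : forall (c : C) a, qstar (c *: a) = c^* *: qstar a;
  qstar_mul : forall a b, qstar (a * b) = qstar b * qstar a;
  qstar_invol : forall a, qstar (qstar a) = a;
  qstar_z : qstar qz = qzb;
  qsig_add : forall a b, qsig (a + b) = qsig a + qsig b;
  qsig_scale : forall (c : C) a, qsig (c *: a) = c *: qsig a;
  qsig_mul : forall a b, qsig (a * b) = qsig a * qsig b;
  qsig_one : qsig 1 = 1;
  qsig_z : qsig qz = q *: qz;
  qsig_zb : qsig qzb = q^-1 *: qzb;
  qdz_add : forall a b, qdz (a + b) = qdz a + qdz b;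
  qdz_scale : forall (c : C) a, qdz (c *: a) = c *: qdz a;
  qdz_leibniz : forall a b, qdz (a * b) = qdz a * qsig (qsig b) + a * qdz b;
  qdz_z : qdz qz = 1;
  qdz_zb : qdz qzb = 0;
  qdzb_add : forall a b, qdzb (a + b) = qdzb a + qdzb b;
  qdzb_scale : forall (c : C) a, qdzb (c *: a) = c *: qdzb a;
  qdzb_leibniz : forall a b, qdzb (a * b) = qdzb a * qsig (qsig b) + a * qdzb b;
  qdzb_z : qdzb qz = 0;
  qdzb_zb : qdzb qzb = 1
}.
Arguments qdisk : clear implicits.
Arguments qA {_ _} _.
Arguments qstar {_ _} _ _.
Arguments qz {_ _} _.
Arguments qzb {_ _} _.
Arguments qsig {_ _} _ _.
Arguments qdz {_ _} _ _.
Arguments qdzb {_ _} _ _.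

(* Coordinates in the free left modules:
   spinor Q  : phi = a s + b sbar            ~ (a, b)
   form1 Q   : xi  = a dz + b dzbar          ~ (a, b)                        *)
Definition spinor C q (Q : qdisk C q) := (qA Q * qA Q)%type.
Definition form1 C q (Q : qdisk C q) := (qA Q * qA Q)%type.

(* Omega^1 (x)_A S, free left module on dz(x)s, dz(x)sbar, dzbar(x)s, dzbar(x)sbar *)
Record omS (A : Type) := OmS { os1 : A; os2 : A; os3 : A; os4 : A }.
(* S (x)_A Omega^1, free left module on s(x)dz, s(x)dzbar, sbar(x)dz, sbar(x)dzbar *)
Record sOm (A : Type) := SOm { so1 : A; so2 : A; so3 : A; so4 : A }.

Section Ops.
Variables (C : numClosedFieldType) (q : C) (Q : qdisk C q).
Local Notation A := (qA Q).
Local Notation sg := (qsig Q).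
Local Notation st := (qstar Q).

Definition wQ : A := 1 - qzb Q * qz Q.

Definition lmulS (a : A) (phi : spinor Q) : spinor Q := (a * phi.1, a * phi.2).
Definition negS (phi : spinor Q) : spinor Q := (- phi.1, - phi.2).
Definition subS (phi psi : spinor Q) : spinor Q := (phi.1 - psi.1, phi.2 - psi.2).

(* star on Omega^1:  star(a dz + b dzbar) = dzbar star(a) + dz star(b)
   = sg(sg(star b)) dz + sg(sg(star a)) dzbar,  using (dz)^star = dzbar *)
Definition ostar (xi : form1 Q) : form1 Q :=
  (sg (sg (st xi.2)), sg (sg (st xi.1))).

(* xi (x) phi in Omega^1 (x)_A S, using dz.c = sg(sg c).dz *)
Definition tensorOS (xi : form1 Q) (phi : spinor Q) : omS A :=
  OmS (xi.1 * sg (sg phi.1)) (xi.1 * sg (sg phi.2))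
      (xi.2 * sg (sg phi.1)) (xi.2 * sg (sg phi.2)).

(* phi (x) xi in S (x)_A Omega^1, using s.c = sg c . s *)
Definition tensorSO (phi : spinor Q) (xi : form1 Q) : sOm A :=
  SOm (phi.1 * sg xi.1) (phi.1 * sg xi.2) (phi.2 * sg xi.1) (phi.2 * sg xi.2).

(* sigma_S : S (x) Omega^1 -> Omega^1 (x) S, left-linear, with
   s(x)dz |-> q dz(x)s, s(x)dzbar |-> q^-1 dzbar(x)s, and same with sbar
   (this is sigma_S(s (x) da) = q^{|a|} da (x) s on generators). *)
Definition sigmaS (x : sOm A) : omS A :=
  OmS (q *: so1 x) (q *: so3 x) (q^-1 *: so2 x) (q^-1 *: so4 x).

(* Clifford action (>) : Omega^1 (x) S -> S, bimodule map with
   dz > sbar = alpha w s, dzbar > s = beta w sbar, others 0 *)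
Definition clifford (alpha beta : C) (x : omS A) : spinor Q :=
  (alpha *: (os2 x * wQ), beta *: (os3 x * wQ)).

Definition cliffact (alpha beta : C) (xi : form1 Q) (phi : spinor Q) : spinor Q :=
  clifford alpha beta (tensorOS xi phi).

(* nabla_S (a s + b sbar) = da (x) s + db (x) sbar *)
Definition nablaS (phi : spinor Q) : omS A :=
  OmS (qdz Q phi.1) (qdz Q phi.2) (qdzb Q phi.1) (qdzb Q phi.2).

Definition Dirac (alpha beta : C) (phi : spinor Q) : spinor Q :=
  clifford alpha beta (nablaS phi).

(* J(a s + b sbar) = J(s).star(a) + J(sbar).star(b)
   = delta sg(star a) sbar - delta^-1 sg(star b) s *)
Definition Jop (delta : C) (phi : spinor Q) : spinor Q :=
  (- (delta^-1 *: sg (st phi.2)), delta *: sg (st phi.1)).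

Definition gammaS (phi : spinor Q) : spinor Q := (phi.1, - phi.2).

End Ops.

Arguments lmulS {C q} Q a phi.
Arguments negS {C q} Q phi.
Arguments subS {C q} Q phi psi.
Arguments ostar {C q} Q xi.
Arguments tensorOS {C q} Q xi phi.
Arguments tensorSO {C q} Q phi xi.
Arguments sigmaS {C q} Q x.
Arguments clifford {C q} Q alpha beta x.
Arguments cliffact {C q} Q alpha beta xi phi.
Arguments nablaS {C q} Q phi.
Arguments Dirac {C q} Q alpha beta phi.
Arguments Jop {C q} Q delta phi.
Arguments gammaS {C q} Q phi.
Arguments wQ {C q} Q.

From HB Require Import structures.
From mathcomp Require Import all_boot all_order all_algebra.
From mathcomp Require Import ring.
Set Implicit Arguments. Unset Strict Implicit. Unset Printing Implicit Defensive.
Import Order.TTheory GRing.Theory Num.Theory.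
Local Open Scope ring_scope.

(* Every identity on C_q[D] is checked on the generators z, zbar and
   propagated by induction.  Two commutation rules carry the argument: w
   q-commutes with everything, w a = sg (sg a) w, and the antilinear map
   a |-> sg (a^* ), which is how J acts on coefficients, exchanges the two
   partial derivatives up to a power of q and of sg.  The first rule makes
   [D, a] right A-linear; since J turns left into right multiplication, this
   gives the first-order condition and the commutant property.  The reality
   condition delta^2 q alpha = - beta^* is exactly what matches the scalar
   prefactors in J D = D J and in the compatibility of J with the Clifford
   action. *)

Lemma additive_map0 (U V : zmodType) (f : U -> V) :
  {morph f : x y / x + y} -> f 0 = 0.
Proof. by move=> fD; apply: (addIr (f 0)); rewrite -fD !add0r. Qed.

Lemma additive_mapN (U V : zmodType) (f : U -> V) :
  {morph f : x y / x + y} -> forall x, f (- x) = - f x.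
Proof.
by move=> fD x; apply/eqP; rewrite -addr_eq0 -fD addNr (additive_map0 fD).
Qed.

Section QuantumDisk.
Variables (C : numClosedFieldType) (q : C) (Q : qdisk C q).
Hypotheses (q_real : q \is Num.real) (q_neq0 : q != 0).
Local Notation sg := (qsig Q).
Local Notation st := (qstar Q).
Local Notation dz := (qdz Q).
Local Notation dzb := (qdzb Q).
Local Notation w := (wQ Q).

Lemma qstar0 : st 0 = 0.
Proof. exact: additive_map0 (@qstar_add _ _ Q). Qed.

Lemma qsig0 : sg 0 = 0.
Proof. exact: additive_map0 (@qsig_add _ _ Q). Qed.

Lemma qdz0 : dz 0 = 0.
Proof. exact: additive_map0 (@qdz_add _ _ Q). Qed.

Lemma qdzb0 : dzb 0 = 0.
Proof. exact: additive_map0 (@qdzb_add _ _ Q). Qed.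

Lemma qstarN a : st (- a) = - st a.
Proof. exact: additive_mapN (@qstar_add _ _ Q) a. Qed.

Lemma qsigN a : sg (- a) = - sg a.
Proof. exact: additive_mapN (@qsig_add _ _ Q) a. Qed.

Lemma qdzN a : dz (- a) = - dz a.
Proof. exact: additive_mapN (@qdz_add _ _ Q) a. Qed.

Lemma qdzbN a : dzb (- a) = - dzb a.
Proof. exact: additive_mapN (@qdzb_add _ _ Q) a. Qed.

Lemma qstar1 : st 1 = 1.
Proof.
by have := @qstar_mul _ _ Q (st 1) 1; rewrite mulr1 !qstar_invol mulr1.
Qed.

Lemma qstar_zb : st (qzb Q) = qz Q.
Proof. by rewrite -(qstar_z Q) qstar_invol. Qed.

Lemma qdz1 : dz 1 = 0.
Proof.
apply: (addIr (dz 1)); rewrite -{3}(mulr1 1) qdz_leibniz.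
by rewrite !qsig_one mulr1 mul1r add0r.
Qed.

Lemma qdzb1 : dzb 1 = 0.
Proof.
apply: (addIr (dzb 1)); rewrite -{3}(mulr1 1) qdzb_leibniz.
by rewrite !qsig_one mulr1 mul1r add0r.
Qed.

Lemma qsig_star_qsig a : sg (st (sg a)) = st a.
Proof.
have q_conj : q^* = q by exact: conj_Creal.
have qV_conj : q^-1^* = q^-1 by rewrite conj_Creal // rpredV.
elim/(@qgen _ _ Q): a => [| | | c a IH | a b IHa IHb | a b IHa IHb].
- by rewrite qsig_one qstar1 qsig_one.
- rewrite qsig_z qstar_scale qstar_z qsig_scale qsig_zb q_conj scalerA.
  by rewrite mulfV // scale1r.
- rewrite qsig_zb qstar_scale qstar_zb qsig_scale qsig_z qV_conj scalerA.
  by rewrite mulVf // scale1r.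
- by rewrite qsig_scale !qstar_scale qsig_scale IH.
- by rewrite qsig_add !qstar_add qsig_add IHa IHb.
- by rewrite qsig_mul !qstar_mul qsig_mul IHa IHb.
Qed.

Lemma qstar_w : st w = w.
Proof. by rewrite /wQ qstar_add qstar1 qstarN qstar_mul qstar_z qstar_zb. Qed.

Lemma qsig_w : sg w = w.
Proof.
rewrite /wQ qsig_add qsig_one qsigN qsig_mul qsig_z qsig_zb -scalerAl -scalerAr.
by rewrite scalerA mulVf // scale1r.
Qed.

Lemma w_mul a : w * a = sg (sg a) * w.
Proof.
have qq : q * q * q ^- 2 = 1 by rewrite -expr2 mulfV // expf_neq0.
have qVqV : q^-1 * q^-1 = q ^- 2 by rewrite -invfM -expr2.
elim/(@qgen _ _ Q): a => [| | | c a IH | a b IHa IHb | a b IHa IHb].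
- by rewrite !qsig_one mulr1 mul1r.
- rewrite !qsig_z !qsig_scale qsig_z scalerA /wQ mulrBl mulrBr mul1r mulr1.
  rewrite -scalerAl mulrA (qrel Q) !mulrDl !mulNr -!scalerAl !mul1r.
  rewrite !scalerDr scalerN !scalerA qq !scale1r.
  by rewrite [_ - _ + _]addrC opprD addrA subrr add0r opprB.
- rewrite !qsig_zb !qsig_scale qsig_zb scalerA /wQ mulrBl mulrBr mul1r mulr1.
  rewrite -mulrA (qrel Q) !mulrDr !mulrN !mulr1 -!scalerAr -!scalerAl !mulrA qVqV.
  by rewrite mulr1 [_ - _ + _]addrC opprD addrA subrr add0r opprB.
- by rewrite -scalerAr IH !qsig_scale -!scalerAl.
- by rewrite mulrDr IHa IHb !qsig_add mulrDl.
- by rewrite mulrA IHa -mulrA IHb !qsig_mul mulrA.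
Qed.

Lemma qdz_sig_star a : dz (sg (st a)) = q *: sg (sg (sg (st (dzb a)))).
Proof.
elim/(@qgen _ _ Q): a => [| | | c a IH | a b IHa IHb | a b IHa IHb].
- by rewrite qstar1 qsig_one qdz1 qdzb1 qstar0 !qsig0 scaler0.
- by rewrite qstar_z qsig_zb qdz_scale qdz_zb qdzb_z qstar0 !qsig0 !scaler0.
- by rewrite qstar_zb qsig_z qdz_scale qdz_z qdzb_zb qstar1 !qsig_one.
- rewrite !qstar_scale qsig_scale qdz_scale IH qdzb_scale qstar_scale.
  by rewrite !qsig_scale !scalerA mulrC.
- rewrite !qstar_add qsig_add qdz_add IHa IHb qdzb_add qstar_add.
  by rewrite !qsig_add scalerDr.
- rewrite qstar_mul qsig_mul qdz_leibniz IHa IHb qdzb_leibniz.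
  rewrite qstar_add !qstar_mul !qsig_add !qsig_mul !qsig_star_qsig scalerDr.
  by rewrite -scalerAl -scalerAr addrC.
Qed.

Lemma qdzb_sig_star a : dzb (sg (st a)) = q^-1 *: sg (sg (sg (st (dz a)))).
Proof.
elim/(@qgen _ _ Q): a => [| | | c a IH | a b IHa IHb | a b IHa IHb].
- by rewrite qstar1 qsig_one qdzb1 qdz1 qstar0 !qsig0 scaler0.
- by rewrite qstar_z qsig_zb qdzb_scale qdzb_zb qdz_z qstar1 !qsig_one.
- by rewrite qstar_zb qsig_z qdzb_scale qdzb_z qdz_zb qstar0 !qsig0 !scaler0.
- rewrite !qstar_scale qsig_scale qdzb_scale IH qdz_scale qstar_scale.
  by rewrite !qsig_scale !scalerA mulrC.
- rewrite !qstar_add qsig_add qdzb_add IHa IHb qdz_add qstar_add.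
  by rewrite !qsig_add scalerDr.
- rewrite qstar_mul qsig_mul qdzb_leibniz IHa IHb qdz_leibniz.
  rewrite qstar_add !qstar_mul !qsig_add !qsig_mul !qsig_star_qsig scalerDr.
  by rewrite -scalerAl -scalerAr addrC.
Qed.

End QuantumDisk.

(* The right action phi.a of the bimodule S is rmulS phi (sg a). *)
Definition rmulS C q (Q : qdisk C q) (phi : spinor Q) (c : qA Q) : spinor Q :=
  (phi.1 * c, phi.2 * c).

Lemma lmulS_rmulS C q (Q : qdisk C q) (a c : qA Q) (phi : spinor Q) :
  lmulS Q a (rmulS phi c) = rmulS (lmulS Q a phi) c.
Proof. by rewrite /lmulS /rmulS /= !mulrA. Qed.

Section SpectralTriple.
Variables (C : numClosedFieldType) (q : C) (Q : qdisk C q).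
Hypotheses (q_real : q \is Num.real) (q_neq0 : q != 0).
Variables (alpha beta delta : C).
Hypotheses (delta_real : delta \is Num.real) (delta_neq0 : delta != 0).
Hypothesis reality : delta ^+ 2 * q * alpha = - beta^*.
Local Notation sg := (qsig Q).
Local Notation st := (qstar Q).
Local Notation w := (wQ Q).
Local Notation D := (Dirac Q alpha beta).
Local Notation J := (Jop Q delta).
Local Notation g := (gammaS Q).

Lemma beta_conj : beta^* = - (delta ^+ 2 * q * alpha).
Proof. by rewrite reality opprK. Qed.

Lemma alpha_conj : alpha^* = - beta / (delta ^+ 2 * q).
Proof.
have := congr1 Num.conj reality; rewrite !rmorphM rmorphN /= conjCK.
rewrite (conj_Creal delta_real) (conj_Creal q_real) => <-.
by rewrite mulrC mulKf // mulf_neq0 // expf_neq0.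
Qed.

Lemma Jop_cliffact xi phi :
  J (cliffact Q alpha beta xi phi)
  = clifford Q alpha beta (sigmaS Q (tensorSO Q (J phi) (ostar Q xi))).
Proof.
case: xi phi => [x1 x2] [p1 p2].
rewrite /Jop /cliffact /clifford /tensorOS /sigmaS /tensorSO /ostar /=.
rewrite !qstar_scale !qstar_mul !qsig_scale !qsig_mul qstar_w qsig_w //.
rewrite !qsig_star_qsig // !w_mul // !qsig_mul !qsig_star_qsig // -!scalerAl.
rewrite !mulNr -!scalerAl !scalerN !scalerA -!scaleNr.
congr (_ *: _, _ *: _).
- by rewrite beta_conj; field.
- by rewrite alpha_conj; field; rewrite q_neq0 delta_neq0.
Qed.

Lemma Dirac_s a : D (a, 0) = (0, beta *: (qdzb Q a * w)).
Proof. by rewrite /Dirac /clifford /nablaS /= qdz0 mul0r scaler0. Qed.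

Lemma Dirac_sbar a : D (0, a) = (alpha *: (qdz Q a * w), 0).
Proof. by rewrite /Dirac /clifford /nablaS /= qdzb0 mul0r scaler0. Qed.

Lemma JopK phi : J (J phi) = negS Q phi.
Proof.
have deltaV_real : delta^-1 \is Num.real by rewrite rpredV.
case: phi => p1 p2; rewrite /Jop /negS /=; congr (_, _).
- rewrite !qstar_scale !qsig_scale qsig_star_qsig // qstar_invol.
  by rewrite (conj_Creal delta_real) scalerA mulVf // scale1r.
- rewrite qstarN qsigN !qstar_scale !qsig_scale qsig_star_qsig // qstar_invol.
  by rewrite (conj_Creal deltaV_real) scalerN scalerA mulfV // scale1r.
Qed.

Lemma Jop_gamma phi : J (g phi) = negS Q (g (J phi)).
Proof.
by case: phi => p1 p2; rewrite /Jop /negS /gammaS /= qstarN qsigN scalerN !opprK.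
Qed.

Lemma gammaK phi : g (g phi) = phi.
Proof. by case: phi => p1 p2; rewrite /gammaS /= opprK. Qed.

Lemma gamma_lmulS a phi : g (lmulS Q a phi) = lmulS Q a (g phi).
Proof. by case: phi => p1 p2; rewrite /gammaS /lmulS /= mulrN. Qed.

Lemma Dirac_gamma phi : D (g phi) = negS Q (g (D phi)).
Proof.
case: phi => p1 p2; rewrite /Dirac /clifford /nablaS /negS /gammaS /=.
by rewrite qdzN mulNr scalerN opprK.
Qed.

Lemma Jop_lmulS b phi : J (lmulS Q b phi) = rmulS (J phi) (sg (st b)).
Proof.
case: phi => p1 p2; rewrite /Jop /lmulS /rmulS /=.
by rewrite !qstar_mul !qsig_mul mulNr -!scalerAl.
Qed.

Lemma lmulS_Jconj Jinv : cancel Jinv J ->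
  forall a b phi,
  lmulS Q a (J (lmulS Q b (Jinv phi))) = J (lmulS Q b (Jinv (lmulS Q a phi))).
Proof. by move=> JinvK a b phi; rewrite !Jop_lmulS !JinvK lmulS_rmulS. Qed.

Lemma Jop_Dirac phi : J (D phi) = D (J phi).
Proof.
case: phi => p1 p2; rewrite /Jop /Dirac /clifford /nablaS /=.
rewrite !qstar_scale !qsig_scale !qstar_mul !qsig_mul qstar_w qsig_w // !w_mul //.
rewrite qdzbN qdz_scale qdzb_scale qdz_sig_star // qdzb_sig_star //.
rewrite mulNr -!scalerAl scalerN !scalerA -!scaleNr.
congr (_ *: _, _ *: _).
- by rewrite beta_conj; field.
- by rewrite alpha_conj; field; rewrite q_neq0 delta_neq0.
Qed.

Definition Dirac_comm a psi := subS Q (D (lmulS Q a psi)) (lmulS Q a (D psi)).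

Lemma Dirac_commE a psi :
  Dirac_comm a psi = (alpha *: (qdz Q a * sg (sg psi.2) * w),
                      beta *: (qdzb Q a * sg (sg psi.1) * w)).
Proof.
case: psi => p1 p2; rewrite /Dirac_comm /Dirac /clifford /nablaS /subS /lmulS /=.
by rewrite qdz_leibniz qdzb_leibniz !mulrDl !scalerDr -!scalerAr !mulrA !addrK.
Qed.

Lemma Dirac_comm_rmulS a psi c :
  Dirac_comm a (rmulS psi c) = rmulS (Dirac_comm a psi) c.
Proof.
have w_mulr x y : x * sg (sg y) * w = x * w * y by rewrite -mulrA -w_mul // mulrA.
by rewrite !Dirac_commE /rmulS /= !qsig_mul !mulrA !w_mulr -!scalerAl.
Qed.

End SpectralTriple.

Theorem mainTheorem9 (C : numClosedFieldType) (q : C)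
  (hq : q \is Num.real) (hq0 : q != 0) (Q : qdisk C q)
  (alpha beta delta : C) (hd : delta \is Num.real) (hd0 : delta != 0)
  (hrel : delta ^+ 2 * q * alpha = - beta^*) :
  let D := Dirac Q alpha beta in
  let J := Jop Q delta in
  let g := gammaS Q in
  (forall (xi : form1 Q) (phi : spinor Q),
      J (cliffact Q alpha beta xi phi)
      = clifford Q alpha beta (sigmaS Q (tensorSO Q (J phi) (ostar Q xi)))) /\
  (forall a : qA Q, D (a, 0) = (0, beta *: (qdzb Q a * wQ Q))) /\
  (forall a : qA Q, D (0, a) = (alpha *: (qdz Q a * wQ Q), 0)) /\
  (forall phi : spinor Q, J (J phi) = negS Q phi) /\
  (forall phi : spinor Q, J (g phi) = negS Q (g (J phi))) /\
  (forall phi : spinor Q, g (g phi) = phi) /\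
  (forall (a : qA Q) (phi : spinor Q), g (lmulS Q a phi) = lmulS Q a (g phi)) /\
  (forall phi : spinor Q, D (g phi) = negS Q (g (D phi))) /\
  (forall Jinv : spinor Q -> spinor Q, cancel J Jinv -> cancel Jinv J ->
     forall (a b : qA Q) (phi : spinor Q),
       lmulS Q a (J (lmulS Q b (Jinv phi))) = J (lmulS Q b (Jinv (lmulS Q a phi)))) /\
  (forall phi : spinor Q, J (D phi) = D (J phi)) /\
  (forall Jinv : spinor Q -> spinor Q, cancel J Jinv -> cancel Jinv J ->
     forall (a b : qA Q) (phi : spinor Q),
       let K := fun psi => J (lmulS Q b (Jinv psi)) in
       let Da := fun psi => subS Q (D (lmulS Q a psi)) (lmulS Q a (D psi)) in
       Da (K phi) = K (Da phi)).
Proof.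
rewrite /=; do ![split].
- by move=> xi phi; apply: Jop_cliffact.
- exact: Dirac_s.
- exact: Dirac_sbar.
- by move=> phi; apply: JopK.
- exact: Jop_gamma.
- exact: gammaK.
- exact: gamma_lmulS.
- exact: Dirac_gamma.
- by move=> Jinv _; apply: lmulS_Jconj.
- by move=> phi; apply: Jop_Dirac.
- move=> Jinv _ JinvK a b phi; rewrite !Jop_lmulS !JinvK.
  exact: Dirac_comm_rmulS.
Qed.
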